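(* Let $\nu$ be a bounded continuous valuation on $\mathbb N_{\rm cof}$. Then there exist a discrete valuation $\alpha$ on $\mathbb N_{\rm cof}$ and a nonnegative real number $r$ such that $\nu=\alpha+r\beta$, where $\beta(U)=1$ for every non-empty open $U\subseteq\mathbb N_{\rm cof}$ and $\beta(\emptyset)=0$.
   Context: $\mathbb N_{\rm cof}$ is the set of natural numbers with the cofinite topology (open sets are $\emptyset$ and the complements of finite sets). A valuation on a space $X$ is a map $\nu:\mathcal OX\to[0,\infty]$ with $\nu(\emptyset)=0$, monotone and modular; continuous if it preserves directed suprema of opens; bounded if $\nu(X)<\infty$. A discrete valuation is one of the form $\sum_{i=1}^\infty r_i\delta_{x_i}$ ($r_i\in[0,\infty)$, $\delta_x$ the Dirac valuation at $x$), the supremum of its partial sums. *)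

From HB Require Import structures.
From mathcomp Require Import all_boot all_order all_algebra.
From mathcomp Require Import boolp classical_sets functions cardinality reals constructive_ereal ereal.
Set Implicit Arguments. Unset Strict Implicit. Unset Printing Implicit Defensive.
Import Order.TTheory GRing.Theory Num.Theory.
Local Open Scope classical_set_scope.
Local Open Scope ring_scope.
Local Open Scope ereal_scope.

Definition cof_open (U : set nat) : Prop := U = set0 \/ finite_set (~` U).

Definition cof_directed (D : set (set nat)) : Prop :=
  (D `<=` cof_open) /\ (exists U, D U) /\
  (forall U V, D U -> D V -> exists W, D W /\ U `<=` W /\ V `<=` W).

(* A valuation on N_cof with values in [0, +oo]; only its values on opens matter. *)
Definition valuation (R : realType) (nu : set nat -> \bar R) : Prop :=
  nu set0 = 0 /\
  (forall U, cof_open U -> 0 <= nu U) /\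
  (forall U V, cof_open U -> cof_open V -> U `<=` V -> nu U <= nu V) /\
  (forall U V, cof_open U -> cof_open V ->
     nu U + nu V = nu (U `|` V) + nu (U `&` V)).

Definition continuous_valuation (R : realType) (nu : set nat -> \bar R) : Prop :=
  valuation nu /\
  (forall D, cof_directed D -> nu (\bigcup_(U in D) U) = ereal_sup (nu @` D)).

Definition bounded_valuation (R : realType) (nu : set nat -> \bar R) : Prop :=
  nu setT < +oo.

Definition dirac_val (R : realType) (x : nat) (U : set nat) : \bar R :=
  if `[< U x >] then 1 else 0.

(* sum_{i>=1} r_i delta_{x_i} (indexed from 0 here), as the supremum of its
   partial sums. *)
Definition disc_sum (R : realType) (r : nat -> R) (x : nat -> nat)
    (U : set nat) : \bar R :=
  ereal_sup (range (fun n => \sum_(i < n) ((r i)%:E * dirac_val R (x i) U))).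

Definition discrete_valuation (R : realType) (alpha : set nat -> \bar R) : Prop :=
  exists (r : nat -> R) (x : nat -> nat),
    (forall i, (0 <= r i)%R) /\
    (forall U, cof_open U -> alpha U = disc_sum r x U).

Definition beta_val (R : realType) (U : set nat) : \bar R :=
  if `[< U = set0 >] then 0 else 1.

From HB Require Import structures.
From mathcomp Require Import all_boot all_order all_algebra.
From mathcomp Require Import boolp classical_sets functions cardinality reals constructive_ereal ereal.
From mathcomp Require Import lra.
Set Implicit Arguments. Unset Strict Implicit. Unset Printing Implicit Defensive.
Import Order.TTheory GRing.Theory Num.Theory.
Local Open Scope classical_set_scope.
Local Open Scope ring_scope.
Local Open Scope ereal_scope.

Lemma cof_openT : cof_open setT.
Proof. by right; rewrite setCT. Qed.

Lemma cof_open_setC1 (i : nat) : cof_open (~` [set i]).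
Proof. by right; rewrite setCK; exact: finite_set1. Qed.

Lemma cof_open_II (U : set nat) (n : nat) : ~` U `<=` `I_n -> cof_open U.
Proof. by move=> UCn; right; exact: sub_finite_set UCn (finite_II n). Qed.

Lemma cof_openU (U V : set nat) : cof_open U -> cof_open V -> cof_open (U `|` V).
Proof.
move=> [->|fU]; first by rewrite set0U.
by move=> _; right; rewrite setCU; exact: finite_setIl.
Qed.

Lemma cof_openI (U V : set nat) : cof_open U -> cof_open V -> cof_open (U `&` V).
Proof.
move=> [->|fU]; first by rewrite set0I; left.
move=> [->|fV]; first by rewrite setI0; left.
by right; rewrite setCI finite_setU.
Qed.

Lemma finite_nat_sub_II (A : set nat) : finite_set A -> exists n, A `<=` `I_n.
Proof.
move=> /finite_seqP[s ->]; exists (\max_(k <- s) k).+1 => i /= si.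
by rewrite ltnS (leq_bigmax_seq _ si).
Qed.

Section BoundedValuation.
Variables (R : realType) (nu : set nat -> \bar R).
Hypotheses (nu_val : valuation nu) (nu_bnd : bounded_valuation nu).

Lemma valuation_fin_num (U : set nat) : cof_open U -> nu U \is a fin_num.
Proof.
have [_ [nu_ge0 [nu_mono _]]] := nu_val.
move=> oU; rewrite ge0_fin_numE; last exact: nu_ge0.
exact: le_lt_trans (nu_mono _ _ oU cof_openT (@subsetT _ _)) nu_bnd.
Qed.

Lemma valuation_modularR (U V : set nat) : cof_open U -> cof_open V ->
  (fine (nu U) + fine (nu V) = fine (nu (U `|` V)) + fine (nu (U `&` V)))%R.
Proof.
have [_ [_ [_ nu_mod]]] := nu_val.
move=> oU oV; apply: EFin_inj; rewrite !EFinD !fineK ?valuation_fin_num //;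
  [exact: nu_mod | exact: cof_openI | exact: cof_openU].
Qed.

Definition atom_weight (i : nat) : R := (fine (nu setT) - fine (nu (~` [set i])))%R.

Lemma atom_weight_ge0 (i : nat) : (0 <= atom_weight i)%R.
Proof.
have [_ [_ [nu_mono _]]] := nu_val.
rewrite subr_ge0 -lee_fin (fineK (valuation_fin_num cof_openT)).
rewrite (fineK (valuation_fin_num (cof_open_setC1 i))).
exact: nu_mono (cof_open_setC1 i) cof_openT (@subsetT _ _).
Qed.

Lemma valuation_cofinite (n : nat) (U : set nat) : ~` U `<=` `I_n ->
  fine (nu U) = (fine (nu setT) - \sum_(i < n | ~~ `[< U i >]) atom_weight i)%R.
Proof.
elim: n U => [|n IHn] U UCn.
  have -> : U = setT by apply/seteqP; split=> // i _; apply: contrapT => /UCn.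
  by rewrite big_ord0 subr0.
rewrite big_mkcond big_ord_recr /= -big_mkcond.
have [Un|nUn] := pselect (U n).
  rewrite asboolT // addr0; apply: IHn => i /[dup] /UCn /=.
  by rewrite ltnS leq_eqVlt => /orP[/eqP -> /(_ Un)|].
pose V := U `|` [set n].
have VCn : ~` V `<=` `I_n.
  move=> i nVi; have /= := UCn i (fun Ui => nVi (or_introl Ui)).
  by rewrite ltnS leq_eqVlt => /orP[/eqP ein|//]; case: nVi; right.
have sumVU : (\sum_(i < n | ~~ `[< V i >]) atom_weight i =
              \sum_(i < n | ~~ `[< U i >]) atom_weight i)%R.
  apply: eq_bigl => i; congr (~~ _); apply: asbool_equiv_eq.
  split=> [[//|ein]|]; last by left.
  by have := ltn_ord i; rewrite ein ltnn.
have VW_T : V `|` ~` [set n] = setT.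
  by apply/seteqP; split=> // i _; have [ein|nein] := pselect (i = n); [left; right|right].
have VW_U : V `&` ~` [set n] = U.
  apply/seteqP; split=> [i [[//|ein] /(_ ein)]|i Ui] //.
  by split; [left | move=> ein; apply: nUn; rewrite -ein].
have := valuation_modularR (cof_open_II VCn) (cof_open_setC1 n).
rewrite VW_T VW_U (IHn _ VCn) sumVU asboolF //=.
rewrite [atom_weight n]/atom_weight; lra.
Qed.

Lemma sum_atom_weight_le (n : nat) :
  (\sum_(i < n) atom_weight i <= fine (nu setT))%R.
Proof.
have [_ [nu_ge0 _]] := nu_val.
have tailCn : ~` [set i | (n <= i)%N] `<=` `I_n by move=> i /negP; rewrite -ltnNge.
have := valuation_cofinite tailCn.
under eq_bigl => i do rewrite asboolb -ltnNge ltn_ord.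
have : (0 <= fine (nu [set i | (n <= i)%N]))%R.
  exact/fine_ge0/nu_ge0/(cof_open_II tailCn).
lra.
Qed.

End BoundedValuation.

Lemma ereal_sup_range_addr (R : realType) (T : Type) (f : T -> \bar R) (c : R) :
  ereal_sup (range (fun t => f t + c%:E)) = ereal_sup (range f) + c%:E.
Proof.
apply/eqP; rewrite eq_le; apply/andP; split.
  apply: ge_ereal_sup => _ [t _ <-]; apply: leeD2r.
  by apply: ereal_sup_ubound; exists t.
rewrite -[leRHS](@subeK _ _ c%:E) //; apply: leeD2r.
apply: ge_ereal_sup => _ [t _ <-]; rewrite -[f t](@addeK _ c%:E) //.
by apply: leeD2r; apply: ereal_sup_ubound; exists t.
Qed.

Section DiscreteValuation.
Variables (R : realType) (r : nat -> R) (x : nat -> nat).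

Lemma disc_partial_sumE (U : set nat) (m : nat) :
  \sum_(i < m) ((r i)%:E * dirac_val R (x i) U) =
  \sum_(i < m | `[< U (x i) >]) (r i)%:E.
Proof.
rewrite [RHS]big_mkcond; apply: eq_bigr => i _ /=.
by rewrite /dirac_val; case: asboolP; rewrite ?mule1 ?mule0.
Qed.

Lemma disc_sum_set0 : disc_sum r x set0 = 0.
Proof.
rewrite /disc_sum (_ : (fun m => _) = cst 0); first exact/ereal_sup_cst/setT0.
by apply/funext => m; rewrite disc_partial_sumE big_pred0 // => i; rewrite asboolF.
Qed.

Hypothesis r_ge0 : forall i, (0 <= r i)%R.

Lemma disc_sum_cofinite (U : set nat) (n : nat) :
  (forall i, (n <= i)%N -> U (x i)) ->
  disc_sum r x U = disc_sum r x setT - (\sum_(i < n | ~~ `[< U (x i) >]) r i)%:E.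
Proof.
move=> U_tail; set c := (\sum_(i < n | _) r i)%R.
pose P (V : set nat) m := \sum_(i < m | `[< V (x i) >]) (r i)%:E.
have P_mono V : {homo P V : m k / (m <= k)%N >-> m <= k}.
  apply: (@lee_sum_nneg_ord _ (fun i => (r i)%:E) (fun i => `[< V (x i) >])).
  by move=> i _; rewrite lee_fin.
have PUc_PT m : (n <= m)%N -> P U m + c%:E = P setT m.
  move=> nm; rewrite /P.
  under [in RHS]eq_bigl => i do rewrite asboolT //.
  rewrite [in RHS](bigID (fun i : 'I_m => `[< U (x i) >])) /=.
  congr (_ + _); rewrite sumEFin /c (big_ord_widen_cond m (fun i => ~~ `[< U (x i) >]) r nm).
  congr EFin; apply: eq_bigl => i.
  by case: asboolP => //= nUi; rewrite ltnNge; apply/negP => /U_tail.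
have discE V : disc_sum r x V = ereal_sup (range (P V)).
  by rewrite /disc_sum; under eq_fun do rewrite disc_partial_sumE.
rewrite -[disc_sum r x U](@addeK _ c%:E) //; congr (_ - _).
have PUc_tail m : P U m + c%:E <= P setT (m + n)%N.
  by rewrite -PUc_PT ?leq_addl // leeD2r // P_mono ?leq_addr.
have PT_tail m : P setT m <= P U (m + n)%N + c%:E.
  by rewrite PUc_PT ?leq_addl // P_mono ?leq_addr.
rewrite !discE -ereal_sup_range_addr; apply/eqP; rewrite eq_le; apply/andP; split.
  apply: ge_ereal_sup => _ [m _ <-]; apply: le_trans (PUc_tail m) _.
  by apply: ereal_sup_ubound; exists (m + n)%N.
apply: ge_ereal_sup => _ [m _ <-]; apply: le_trans (PT_tail m) _.
by apply: ereal_sup_ubound; exists (m + n)%N.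
Qed.

End DiscreteValuation.

Theorem proposition3p2 (R : realType) (nu : set nat -> \bar R) :
  continuous_valuation nu -> bounded_valuation nu ->
  exists (alpha : set nat -> \bar R) (r : R),
    discrete_valuation alpha /\ (0 <= r)%R /\
    (forall U, cof_open U -> nu U = alpha U + r%:E * beta_val R U).
Proof.
move=> [nu_val _] nu_bnd; have [nu0 _] := nu_val.
have nuT_fin := valuation_fin_num nu_val nu_bnd cof_openT.
pose w := atom_weight nu; pose alpha := disc_sum w id.
have w_ge0 : forall i, (0 <= w i)%R by exact: atom_weight_ge0.
have alphaT_ge0 : 0 <= alpha setT.
  by apply: ereal_sup_ubound; exists 0%N => //; rewrite big_ord0.
have alphaT_le : alpha setT <= nu setT.
  apply: ge_ereal_sup => _ [m _ <-]; rewrite (disc_partial_sumE w id) sumEFin.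
  under eq_bigl => i do rewrite asboolT //.
  by rewrite -(fineK nuT_fin) lee_fin sum_atom_weight_le.
have alphaT_fin : alpha setT \is a fin_num.
  by rewrite ge0_fin_numE // (le_lt_trans alphaT_le nu_bnd).
exists alpha, (fine (nu setT) - fine (alpha setT))%R; split; first by exists w, id.
split; first by rewrite subr_ge0 -lee_fin (fineK nuT_fin) (fineK alphaT_fin).
move=> U [->|/finite_nat_sub_II[n UCn]].
  by rewrite nu0 /alpha disc_sum_set0 /beta_val asboolT // mule0 adde0.
have Un : U n by apply: contrapT => /UCn; rewrite /= ltnn.
rewrite /beta_val asboolF => [|U0]; last by rewrite U0 in Un.
have alphaU : alpha U = alpha setT - (\sum_(i < n | ~~ `[< U i >]) w i)%:E.
  by apply: disc_sum_cofinite => // i ni; apply: contrapT => /UCn /=; rewrite ltnNge ni.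
rewrite mule1 alphaU -(fineK (valuation_fin_num nu_val nu_bnd (cof_open_II UCn))).
rewrite (valuation_cofinite nu_val nu_bnd UCn) -(fineK alphaT_fin) /=.
by rewrite -!EFinB -EFinD; congr EFin; rewrite /w; lra.
Qed.
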